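(* Let $M\ge1$, $h_1,\dots,h_M\ge0$, $P>0$, $\sigma^2>0$ and $\lambda\ge0$. Then the problem $\max_{0\le\alpha_m\le1,\ m=1,\dots,M}\ \log\Big(1+\frac{\sum_{m=1}^M\alpha_m h_mP}{\sigma^2}\Big)+\sum_{m=1}^M\lambda(1-\alpha_m)h_mP$ is equivalent to (in particular, has the same optimal value as) the problem $\max_{0\le\alpha\le1}\ \log\Big(1+\frac{\alpha\sum_{m=1}^M h_mP}{\sigma^2}\Big)+(1-\alpha)\sum_{m=1}^M\lambda h_mP.$
   Context: Here $h_m$ is the channel power gain to receive antenna $m$, $\alpha_m$ is the power splitting ratio at antenna $m$, and $\log$ is the natural logarithm. *)

From Stdlib Require Import Reals.
Open Scope R_scope.

(* sumM M f = f 0 + f 1 + ... + f (M-1)  (antennas indexed 0..M-1) *)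
Fixpoint sumM (M : nat) (f : nat -> R) : R :=
  match M with
  | O => 0
  | S n => sumM n f + f n
  end.

Definition obj_vec (M : nat) (h : nat -> R) (P sigma2 lambda : R)
  (alpha : nat -> R) : R :=
  ln (1 + sumM M (fun m => alpha m * h m * P) / sigma2)
  + sumM M (fun m => lambda * (1 - alpha m) * h m * P).

Definition obj_scal (M : nat) (h : nat -> R) (P sigma2 lambda : R)
  (a : R) : R :=
  ln (1 + a * sumM M (fun m => h m * P) / sigma2)
  + (1 - a) * sumM M (fun m => lambda * h m * P).

Definition is_max_vec (M : nat) (h : nat -> R) (P sigma2 lambda v : R) : Prop :=
  (exists alpha : nat -> R,
      (forall m, (m < M)%nat -> 0 <= alpha m <= 1) /\
      obj_vec M h P sigma2 lambda alpha = v) /\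
  (forall alpha : nat -> R,
      (forall m, (m < M)%nat -> 0 <= alpha m <= 1) ->
      obj_vec M h P sigma2 lambda alpha <= v).

Definition is_max_scal (M : nat) (h : nat -> R) (P sigma2 lambda v : R) : Prop :=
  (exists a : R, 0 <= a <= 1 /\ obj_scal M h P sigma2 lambda a = v) /\
  (forall a : R, 0 <= a <= 1 -> obj_scal M h P sigma2 lambda a <= v).

(* Both objectives depend on the power-splitting ratios only through the total
   power S sent to the information decoder, via the single concave function
   S |-> ln (1 + S / sigma2) + lambda (H - S) with H = sum_m h_m P.  In both
   problems S ranges exactly over [0, H]: in the vector problem it cannot leave
   the interval, and in the scalar problem S = alpha H sweeps it.  Hence both
   optimal values equal the maximum of this function on [0, H], which exists
   because the maximizer is the projection of the stationary point
   1 / lambda - sigma2 onto [0, H]. *)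

From Stdlib Require Import Reals Lra Lia Psatz.
Open Scope R_scope.

Lemma ln_sub_le x y : 0 < x -> 0 < y -> ln x - ln y <= x / y - 1.
Proof.
  intros Hx Hy.
  assert (E : exp (ln x - ln y) = x / y).
  { unfold Rminus. rewrite exp_plus, exp_Ropp, !exp_ln by assumption. reflexivity. }
  pose proof (exp_ineq1_le (ln x - ln y)). lra.
Qed.

Lemma sumM_ext M f g :
  (forall m, (m < M)%nat -> f m = g m) -> sumM M f = sumM M g.
Proof.
  induction M as [|M IH]; simpl; intros Hfg; [reflexivity|].
  rewrite IH by (intros; apply Hfg; lia). rewrite Hfg by lia. reflexivity.
Qed.

Lemma sumM_linear M f g a b :
  sumM M (fun m => a * f m + b * g m) = a * sumM M f + b * sumM M g.
Proof. induction M as [|M IH]; simpl; [ring|]. rewrite IH. ring. Qed.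

Lemma sumM_bounds M f g :
  (forall m, (m < M)%nat -> 0 <= f m <= g m) -> 0 <= sumM M f <= sumM M g.
Proof.
  induction M as [|M IH]; simpl; intros Hfg; [lra|].
  pose proof (IH (fun m Hm => Hfg m ltac:(lia))).
  pose proof (Hfg M ltac:(lia)). lra.
Qed.

Section TotalPower.

Variables (H s l : R).
Hypothesis Hs : 0 < s.

Definition obj_total (S : R) : R := ln (1 + S / s) + l * (H - S).

(* Concavity: the tangent at [Ss] has slope [1 / (s + Ss) - l]. *)
Lemma obj_total_le_of_slope S Ss :
  0 <= S -> 0 <= Ss -> (S - Ss) * (1 - l * (s + Ss)) <= 0 ->
  obj_total S <= obj_total Ss.
Proof.
  intros HS HSs Hslope. unfold obj_total.
  assert (Hpos : forall x, 0 <= x -> 0 < 1 + x / s).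
  { intros x Hx. assert (0 <= x / s) by (apply Rle_mult_inv_pos; lra). lra. }
  pose proof (ln_sub_le _ _ (Hpos S HS) (Hpos Ss HSs)) as Hln.
  assert (Hquot : (1 + S / s) / (1 + Ss / s) - 1 - l * (S - Ss)
                  = (S - Ss) * (1 - l * (s + Ss)) / (s + Ss)) by (field; lra).
  assert ((S - Ss) * (1 - l * (s + Ss)) / (s + Ss) <= 0).
  { assert (0 < / (s + Ss)) by (apply Rinv_0_lt_compat; lra). unfold Rdiv. nra. }
  lra.
Qed.

Lemma obj_total_argmax :
  0 <= H -> exists Ss, 0 <= Ss <= H /\
    forall S, 0 <= S <= H -> obj_total S <= obj_total Ss.
Proof.
  intros HH.
  destruct (Rle_dec (l * (s + H)) 1) as [Hsmall|Hsmall].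
  { exists H. split; [lra|]. intros S HS. apply obj_total_le_of_slope; nra. }
  destruct (Rle_dec 1 (l * s)) as [Hlarge|Hlarge].
  { exists 0. split; [lra|]. intros S HS. apply obj_total_le_of_slope; nra. }
  assert (Hlpos : 0 < l) by nra.
  assert (Hstat : l * (s + (1 / l - s)) = 1) by (field; lra).
  assert (Hscaled : l * (1 / l - s) = 1 - l * s) by (field; lra).
  exists (1 / l - s). split.
  - split; apply Rmult_le_reg_l with l; nra.
  - intros S HS. apply obj_total_le_of_slope; try lra.
    + apply Rmult_le_reg_l with l; nra.
    + rewrite Hstat. lra.
Qed.

End TotalPower.

Section Reduction.

Variables (M : nat) (h : nat -> R) (P sigma2 lambda : R).

Definition total_power : R := sumM M (fun m => h m * P).
Definition info_power (alpha : nat -> R) : R := sumM M (fun m => alpha m * h m * P).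

Local Notation H := total_power.

Lemma obj_vec_total alpha :
  obj_vec M h P sigma2 lambda alpha = obj_total H sigma2 lambda (info_power alpha).
Proof.
  unfold obj_vec, obj_total. f_equal.
  rewrite (sumM_ext M _ (fun m => lambda * (h m * P) + - lambda * (alpha m * h m * P)))
    by (intros; ring).
  rewrite sumM_linear. fold H. unfold info_power. ring.
Qed.

Lemma obj_scal_total a :
  obj_scal M h P sigma2 lambda a = obj_total H sigma2 lambda (a * H).
Proof.
  unfold obj_scal, obj_total. fold H.
  rewrite (sumM_ext M _ (fun m => lambda * (h m * P) + 0 * (h m * P))) by (intros; ring).
  rewrite sumM_linear. fold H. f_equal. ring.
Qed.

Hypotheses (Hh : forall m, (m < M)%nat -> 0 <= h m) (HP : 0 <= P).

Lemma total_power_bounds alpha :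
  (forall m, (m < M)%nat -> 0 <= alpha m <= 1) -> 0 <= info_power alpha <= H.
Proof.
  intros Halpha. apply sumM_bounds. intros m Hm.
  pose proof (Hh m Hm). destruct (Halpha m Hm).
  assert (0 <= h m * P) by nra. nra.
Qed.

Lemma total_power_nonneg : 0 <= H.
Proof.
  apply (sumM_bounds M _ (fun m => h m * P)). intros m Hm.
  pose proof (Hh m Hm). nra.
Qed.

Lemma total_power_const c : info_power (fun _ => c) = c * H.
Proof.
  unfold info_power, H.
  rewrite (sumM_ext M _ (fun m => c * (h m * P) + 0 * (h m * P))) by (intros; ring).
  rewrite sumM_linear. ring.
Qed.

End Reduction.

Lemma scale_onto H Ss : 0 <= Ss <= H -> exists a, 0 <= a <= 1 /\ a * H = Ss.
Proof.
  intros HSs. destruct (Req_dec H 0) as [H0|H0].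
  - exists 0. split; lra.
  - exists (Ss / H). split.
    + split; [apply Rle_mult_inv_pos; lra|].
      apply Rmult_le_reg_l with H; [lra|]. field_simplify; lra.
    + field. exact H0.
Qed.

Theorem lemma5p1 (M : nat) (h : nat -> R) (P sigma2 lambda : R)
  (HM : (1 <= M)%nat)
  (Hh : forall m, (m < M)%nat -> 0 <= h m)
  (HP : 0 < P) (Hs : 0 < sigma2) (Hl : 0 <= lambda) :
  exists v : R,
    is_max_vec M h P sigma2 lambda v /\ is_max_scal M h P sigma2 lambda v.
Proof.
  set (H := total_power M h P).
  assert (HH : 0 <= H) by exact (total_power_nonneg M h P Hh (Rlt_le _ _ HP)).
  destruct (obj_total_argmax H sigma2 lambda Hs HH) as [Ss [HSs Hmax]].
  destruct (scale_onto H Ss HSs) as [c [Hc HcH]].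
  exists (obj_total H sigma2 lambda Ss). split; split.
  - exists (fun _ => c). split; [intros; lra|].
    rewrite obj_vec_total, total_power_const. fold H. rewrite HcH. reflexivity.
  - intros alpha Halpha. rewrite obj_vec_total.
    apply Hmax, (total_power_bounds M h P Hh (Rlt_le _ _ HP) alpha Halpha).
  - exists c. split; [exact Hc|]. rewrite obj_scal_total. fold H. rewrite HcH. reflexivity.
  - intros a Ha. rewrite obj_scal_total. apply Hmax. fold H. split; nra.
Qed.
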